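(* Let $d\ge1$, $\sigma>0$ and $\theta\in\mathbb{R}^d$ with $\|\theta\|_2^2\le\frac{5\sigma^2}{8}$. Let $V=(V_1,\dots,V_d)\sim\mathcal N(0,I_d)$ and define the $d\times d$ matrix $$F_\theta:=\mathbb{E}\left[\int_0^1\frac{VV^\top}{\big(\exp(-u\|\theta\|_2V_1/\sigma)+\exp(u\|\theta\|_2V_1/\sigma)\big)^2}\,du\right].$$ Then for all $j\in[d]$, $$[F_\theta]_{jj}\ge [F_\theta]_{11}\ge \frac{1}{4\big(1+2\|\theta\|_2^2/\sigma^2\big)}.$$ *)

From Stdlib Require Import Reals Lra List.
Open Scope R_scope.

Definition riemann_int (f : R -> R) (a b l : R) : Prop :=
  exists pr : Riemann_integrable f a b, RiemannInt pr = l.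

Definition improper_int (f : R -> R) (l : R) : Prop :=
  exists pr : forall a b, Riemann_integrable f a b,
    forall eps, eps > 0 -> exists A, forall a b, a <= - A -> A <= b ->
      Rabs (RiemannInt (pr a b) - l) < eps.

Definition gauss_density (x : R) : R := exp (- (x ^ 2) / 2) / sqrt (2 * PI).

(* Vectors of R^d are functions nat -> R; coordinate i (0-based) is v i. *)
Definition vcons (x : R) (v : nat -> R) : nat -> R :=
  fun i => match i with O => x | S i' => v i' end.

(* gauss_exp d h l : E[h(V)] = l, for V ~ N(0, I_d), computed as the iterated
   integral  int phi(x_1) int phi(x_2) ... h(x_1,...,x_d) dx_d ... dx_1. *)
Fixpoint gauss_exp (d : nat) (h : (nat -> R) -> R) (l : R) : Prop :=
  match d with
  | O => l = h (fun _ => 0)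
  | S d' => exists g : R -> R,
      (forall x, gauss_exp d' (fun v => h (vcons x v)) (g x)) /\
      improper_int (fun x => g x * gauss_density x) l
  end.

Definition sqnorm (d : nat) (theta : nat -> R) : R :=
  fold_right Rplus 0 (map (fun i => theta i ^ 2) (seq 0 d)).

(* Fentry d sigma theta j k l : the (j,k) entry (0-based indices) of
   F_theta = E[ int_0^1 V V^T / (exp(-u|theta| V_1/sigma) + exp(u|theta| V_1/sigma))^2 du ]
   equals l. *)
Definition Fentry (d : nat) (sigma : R) (theta : nat -> R) (j k : nat) (l : R)
  : Prop :=
  let t := sqrt (sqnorm d theta) in
  exists h : (nat -> R) -> R,
    (forall v, riemann_int
       (fun u => v j * v k /
          (exp (- (u * t * v 0%nat / sigma)) + exp (u * t * v 0%nat / sigma)) ^ 2)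
       0 1 (h v)) /\
    gauss_exp d h l.

(* Let [c = |theta| / sigma], [weight z = 1 / (e^-z + e^z)^2] and
   [psi y = int_0^1 weight (u c y) du = tanh (c y) / (4 c y)] ([mean_weight c]).
   Integrating out the independent coordinates gives [F_11 = E[V^2 psi(V)]] and
   [F_jj = E[psi(V)]] for [j > 1], where [V ~ N(0,1)].  Since
   [(y psi(y))' = weight (c y)], Stein's identity turns [E[V^2 psi(V)]] into
   [E[weight (c V)]], which is at most [E[psi(V)]] because [weight] decreases in
   [|z|].  From [cosh z <= exp (z^2/2)] we get [weight z >= exp (-z^2) / 4],
   hence [E[weight (c V)] >= 1 / (4 sqrt (1 + 2 c^2))]. *)

From Stdlib Require Import Reals Lra Lia List Classical.
From mathcomp Require all_boot all_order all_algebra.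
From mathcomp Require all_classical all_reals all_analysis Rstruct Rstruct_topology.

Module GaussIntegral.
Import all_boot all_order all_algebra all_classical all_reals all_analysis.
Import Rstruct Rstruct_topology.
Import Order.TTheory GRing.Theory Num.Theory numFieldNormedType.Exports.
Local Open Scope classical_set_scope.
Local Open Scope ring_scope.

Lemma derivable_pt_limE (F : R -> R) x l : derivable_pt_lim F x l ->
  @derivable _ R^o R^o F x 1 /\ @derive1 _ R^o F x = l.
Proof.
move=> Fl; rewrite derive1E /derivable /derive.
match goal with |- cvg (?g @ _) /\ _ => have cvg_quot : g @ 0^' --> l end.
  apply/cvgrPdist_lt => e /RltP e0.
  have [d Hd] := Fl e e0.
  exists (pos d); first exact/RltP/cond_pos.
  move=> h /= hd h0.
  rewrite /ball /= sub0r normrN -RabsE in hd.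
  have h0' : h <> 0%coqR by move=> E; rewrite E eqxx in h0.
  have hd' : (Rabs h < d)%coqR by apply/RltP.
  move: (Hd h h0' hd') => /RltP.
  have -> : (h%:A : R^o) = h by rewrite /GRing.scale /= mulr1.
  by rewrite RabsE distrC RdivE RminusE RplusE mulrC (addrC x).
split; first by apply/cvg_ex; exists l.
exact: cvg_lim.
Qed.

Lemma integral_derivable_pt_lim (f F : R -> R) (a b : R) : (a < b)%coqR ->
  (forall x, continuity_pt f x) -> (forall x, derivable_pt_lim F x (f x)) ->
  (\int[lebesgue_measure]_(x in `[a, b]) (f x)%:E)%E = (F b - F a)%:E.
Proof.
move=> ab cf dF.
have cF x : continuity_pt F x.
  by apply: derivable_continuous_pt; exists (f x); apply: dF.
apply: (@continuous_FTC2 _ f (F : R -> R^o)).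
- exact/RltP.
- by apply: continuous_subspaceT => x; apply/continuity_ptE.
- split.
  + by move=> x _; case: (derivable_pt_limE _ _ _ (dF x)).
  + by apply: cvg_at_right_filter; apply/continuity_ptE.
  + by apply: cvg_at_left_filter; apply/continuity_ptE.
- by move=> x _; case: (derivable_pt_limE _ _ _ (dF x)).
Qed.

(* Both constants are identified through the integral of 1 / (1 + x^2) over [0, 1]. *)
Lemma pi_PI : pi = PI.
Proof.
have := integral0_oneDsqr (ler01 : (0:R) <= 1).
rewrite /Rintegral (@integral_derivable_pt_lim _ Ratan.atan 0 1 Rlt_0_1).
- rewrite atan1 Ratan.atan_1 Ratan.atan_0 /= subr0 RdivE.
  have -> : IZR 4 = 4%:R by rewrite IZRposE INRE.
  by move=> /mulIf ->.
- by move=> x; apply/continuity_ptE; apply: continuous_oneDsqrV.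
- move=> x; have := Ratan.derivable_pt_lim_atan x.
  by rewrite RinvE RplusE RpowE /oneDsqr.
Qed.

Lemma antiderivative_gauss_cvg (G : R -> R) : G 0%coqR = 0%coqR ->
  (forall x, derivable_pt_lim G x (Rtrigo_def.exp (- (x ^ 2))%coqR)) ->
  forall eps, (0 < eps)%coqR -> exists A, forall x, (A <= x)%coqR ->
    (Rabs (G x - R_sqrt.sqrt PI / 2) < eps)%coqR.
Proof.
move=> G0 dG.
have GE x : 0 < x -> gauss_integral_proof.integral0_gauss x = G x.
  move=> x0; rewrite /gauss_integral_proof.integral0_gauss /Rintegral.
  rewrite (@integral_derivable_pt_lim gauss_fun G 0 x) /= ?G0 ?subr0 //.
  - exact/RltP.
  - by move=> y; apply/continuity_ptE; apply: continuous_gauss_fun.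
  - by move=> y; have := dG y; rewrite /gauss_fun -RexpE RoppE RpowE.
have cvg_int : @gauss_integral_proof.integral0_gauss R x @[x --> +oo]
    --> Num.sqrt pi / 2.
  have : Num.sqrt (@gauss_integral_proof.integral0_gauss R x ^+ 2) @[x --> +oo]
      --> Num.sqrt (pi / 4).
    apply: continuous_cvg;
      [exact: sqrt_continuous | exact: gauss_integral_proof.cvg_integral0_gauss_sqr].
  rewrite sqrtrM ?pi_ge0// sqrtrV// (_ : 4 = 2 ^+ 2); last by rewrite expr2 -natrM.
  rewrite sqrtr_sqr ger0_norm//.
  rewrite (_ : (fun _ => Num.sqrt _) = gauss_integral_proof.integral0_gauss)//.
  apply/funext => r; rewrite sqrtr_sqr// ger0_norm//.
  exact: gauss_integral_proof.integral0_gauss_ge0.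
have cvgG : G x @[x --> +oo] --> Num.sqrt pi / 2.
  by apply: cvg_trans cvg_int; apply: near_eq_cvg; near=> x; rewrite GE.
move=> eps /RltP e0.
have [M [_ HM]] := (@cvgrPdist_lt _ R^o _ _ _ G (Num.sqrt pi / 2)).1 cvgG eps e0.
exists (Rmax R1 (Rplus M R1)) => x Hx.
apply/RltP.
rewrite RabsE distrC RsqrtE -pi_PI (_ : IZR 2 = 2%:R); last by rewrite IZRposE INRE.
apply: HM; apply/RltP.
have := Rmax_r R1 (Rplus M R1); lra.
Unshelve. all: by end_near. Qed.

End GaussIntegral.

From Coquelicot Require Import Coquelicot.
Open Scope R_scope.
Set Bullet Behavior "Strict Subproofs".

Notation is_RInt_line f l :=
  (is_RInt_gen f (Rbar_locally m_infty) (Rbar_locally p_infty) l).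

Lemma ex_RInt_of_continuous (f : R -> R) :
  (forall x, continuous f x) -> forall a b, ex_RInt f a b.
Proof. intros Hf a b; apply (@ex_RInt_continuous R_CompleteNormedModule); auto. Qed.

Lemma is_RInt_line_spec (f : R -> R) (l : R) : (forall a b, ex_RInt f a b) ->
  is_RInt_line f l <->
  forall eps, 0 < eps -> exists A, forall a b, a <= - A -> A <= b ->
    Rabs (RInt f a b - l) < eps.
Proof.
intros Hex; split.
- intros Hl eps Heps.
  destruct (Hl _ (locally_ball l (mkposreal eps Heps)))
    as [Q R' [M1 HQ] [M2 HR] HQR].
  exists (Rmax (1 - M1) (M2 + 1)); intros a b Ha Hb.
  pose proof (Rmax_l (1 - M1) (M2 + 1)); pose proof (Rmax_r (1 - M1) (M2 + 1)).
  destruct (HQR a b (HQ a ltac:(lra)) (HR b ltac:(lra))) as [y [Hy Hball]].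
  simpl in Hy; rewrite (is_RInt_unique _ _ _ _ Hy); exact Hball.
- intros Hl P [eps HP].
  destruct (Hl eps (cond_pos eps)) as [A HA].
  apply (Filter_prod _ _ _ (fun a => a <= - A) (fun b => A <= b)).
  + exists (- A); intros; lra.
  + exists A; intros; lra.
  + intros a b Ha Hb; exists (RInt f a b); split.
    * apply (@RInt_correct R_CompleteNormedModule), Hex.
    * apply HP, HA; assumption.
Qed.

Lemma improper_int_of_RInt_line (f : R -> R) (l : R) :
  (forall x, continuous f x) -> is_RInt_line f l -> improper_int f l.
Proof.
intros Hc Hl.
pose proof (ex_RInt_of_continuous f Hc) as Hex.
exists (fun a b => ex_RInt_Reals_0 _ _ _ (Hex a b)); intros eps Heps.
destruct (proj1 (is_RInt_line_spec f l Hex) Hl eps Heps) as [A HA].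
exists A; intros a b Ha Hb; rewrite <- RInt_Reals; auto.
Qed.

Lemma RInt_nonneg_widen (f : R -> R) a a' b' b :
  (forall x, continuous f x) -> (forall x, 0 <= f x) ->
  a <= a' -> a' <= b' -> b' <= b -> RInt f a' b' <= RInt f a b.
Proof.
intros Hc Hp Ha Hab Hb.
pose proof (ex_RInt_of_continuous f Hc) as Hex.
rewrite <- (RInt_Chasles f a a' b), <- (RInt_Chasles f a' b' b); auto.
assert (0 <= RInt f a a') by (apply RInt_ge_0; auto).
assert (0 <= RInt f b' b) by (apply RInt_ge_0; auto).
unfold plus; simpl; lra.
Qed.

Lemma RInt_le_RInt_line (g : R -> R) lg :
  (forall x, continuous g x) -> (forall x, 0 <= g x) -> is_RInt_line g lg ->
  forall a b, a <= b -> RInt g a b <= lg.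
Proof.
intros Hc Hp Hg a b Hab.
pose proof (ex_RInt_of_continuous g Hc) as Hex.
apply Rle_plus_epsilon; intros eps Heps.
destruct (proj1 (is_RInt_line_spec g lg Hex) Hg eps Heps) as [A HA].
set (a' := Rmin a (- A)); set (b' := Rmax b A).
specialize (HA a' b' (Rmin_r _ _) (Rmax_r _ _)).
pose proof (RInt_nonneg_widen g a' a b b' Hc Hp (Rmin_l _ _) Hab (Rmax_l _ _)).
apply Rabs_def2 in HA; lra.
Qed.

(* The integral of [f] is the supremum of its integrals over compact intervals. *)
Lemma ex_RInt_line_dominated (f g : R -> R) lg :
  (forall x, continuous f x) -> (forall x, continuous g x) ->
  (forall x, 0 <= f x <= g x) -> is_RInt_line g lg ->
  exists l, is_RInt_line f l.
Proof.
intros Hcf Hcg Hfg Hg.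
pose proof (ex_RInt_of_continuous f Hcf) as Hexf.
pose proof (ex_RInt_of_continuous g Hcg) as Hexg.
assert (Hf0 : forall x, 0 <= f x) by (intros x; apply Hfg).
set (E := fun r => exists a b, a <= b /\ r = RInt f a b).
assert (HE : forall a b, a <= b -> RInt f a b <= lg).
{ intros a b Hab.
  apply Rle_trans with (RInt g a b).
  - apply RInt_le; auto; intros; apply Hfg.
  - apply (RInt_le_RInt_line g); auto; intros x; pose proof (Hfg x); lra. }
destruct (completeness E) as [m [Hub Hlub]].
{ exists lg; intros r [a [b [Hab ->]]]; auto. }
{ exists (RInt f 0 0), 0, 0; split; [lra | reflexivity]. }
exists m; apply (is_RInt_line_spec f m Hexf); intros eps Heps.
destruct (classic (exists a0 b0, a0 <= b0 /\ m - eps < RInt f a0 b0))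
  as [[a0 [b0 [Hab0 Hr]]] | Hn].
2:{ exfalso.
    assert (is_upper_bound E (m - eps)).
    { intros r [a [b [Hab ->]]]; apply Rnot_lt_le; intros Hlt; eauto. }
    specialize (Hlub _ H); lra. }
exists (Rmax (- a0) b0); intros a b Ha Hb.
pose proof (Rmax_l (- a0) b0); pose proof (Rmax_r (- a0) b0).
assert (RInt f a0 b0 <= RInt f a b)
  by (apply RInt_nonneg_widen; auto; lra).
assert (RInt f a b <= m) by (apply Hub; exists a, b; split; [lra | reflexivity]).
apply Rabs_def1; lra.
Qed.

Lemma filter_prod_line (P : R * R -> Prop) :
  (forall a b, a <= b -> P (a, b)) ->
  filter_prod (Rbar_locally m_infty) (Rbar_locally p_infty) P.
Proof.
intros HP; apply (Filter_prod _ _ _ (fun a => a < 0) (fun b => 0 < b)).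
- exists 0; auto.
- exists 0; auto.
- intros a b Ha Hb; apply HP; lra.
Qed.

(* [RInt_gen_norm] applied to [g - f] against itself: [|lg - lf| <= lg - lf]. *)
Lemma is_RInt_line_le (f g : R -> R) lf lg :
  is_RInt_line f lf -> is_RInt_line g lg -> (forall x, f x <= g x) -> lf <= lg.
Proof.
intros Hf Hg Hfg.
assert (Hd : is_RInt_line (fun x => minus (g x) (f x)) (minus lg lf))
  by (apply (is_RInt_gen_minus (V := R_NormedModule)); assumption).
assert (Hn : norm (minus lg lf) <= minus lg lf).
{ apply (RInt_gen_norm (V := R_CompleteNormedModule)
    (fun x => minus (g x) (f x)) (fun x => minus (g x) (f x))); [| | exact Hd | exact Hd].
  - apply filter_prod_line; intros a b H; exact H.
  - apply filter_prod_line; intros a b _ x _.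
    unfold norm, minus, plus, opp; simpl; unfold abs; simpl.
    specialize (Hfg x); rewrite Rabs_right; lra. }
unfold norm, minus, plus, opp in Hn; simpl in Hn; unfold abs in Hn; simpl in Hn.
pose proof (Rabs_pos (lg + - lf)); lra.
Qed.

Lemma is_RInt_line_scal (f : R -> R) c l :
  is_RInt_line f l -> is_RInt_line (fun x => c * f x) (c * l).
Proof. exact (is_RInt_gen_scal (V := R_NormedModule) f c l). Qed.

Lemma is_RInt_line_antiderivative (F f : R -> R) (lm lp : R) :
  (forall x, is_derive F x (f x)) -> (forall x, continuous f x) ->
  is_lim F m_infty lm -> is_lim F p_infty lp -> is_RInt_line f (lp - lm).
Proof.
intros HF Hc Hm Hp.
assert (HD : forall x, Derive F x = f x) by (intros x; apply is_derive_unique, HF).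
apply (is_RInt_gen_ext (Derive F)).
- apply filter_prod_line; intros a b _ x _; apply HD.
- apply is_RInt_gen_Derive; auto.
  + apply filter_prod_line; intros a b _ x _; eexists; apply HF.
  + apply filter_prod_line; intros a b _ x _.
    apply (continuous_ext f); auto; intros; symmetry; apply HD.
Qed.

Lemma is_RInt_line_add_derivative (f g B : R -> R) l :
  is_RInt_line g l -> (forall x, continuous f x) -> (forall x, continuous g x) ->
  (forall x, is_derive B x (f x - g x)) ->
  is_lim B m_infty 0 -> is_lim B p_infty 0 -> is_RInt_line f l.
Proof.
intros Hg Hcf Hcg HB Hm Hp.
assert (HfB : is_RInt_line (fun x => f x - g x) (0 - 0)).
{ apply (is_RInt_line_antiderivative B); auto.
  intros x; apply (continuous_minus f g); auto. }
assert (Hs := is_RInt_gen_plus _ _ _ _ Hg HfB).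
replace l with (plus l (0 - 0)) by (unfold plus; simpl; ring).
revert Hs; apply is_RInt_gen_ext, filter_prod_line.
intros a b _ x _; unfold plus; simpl; ring.
Qed.

Lemma is_lim_m_infty_opp (f : R -> R) (l : R) :
  is_lim (fun x => f (- x)) p_infty l -> is_lim f m_infty l.
Proof.
intros H.
apply (is_lim_ext (fun y => f (- (-1 * y + 0)))).
- intros y; f_equal; ring.
- apply (is_lim_comp_lin (fun x => f (- x))); [| lra].
  replace (Rbar_plus (Rbar_mult (-1) m_infty) 0) with p_infty; [exact H |].
  simpl; destruct Rle_dec; [exfalso; lra | reflexivity].
Qed.

Lemma is_lim_p_infty_inv_bound (B : R -> R) K :
  (forall x, 1 <= x -> Rabs (B x) <= K / x) -> is_lim B p_infty 0.
Proof.
intros HB; apply is_lim_spec; intros eps.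
exists (Rabs K / eps + 1); intros x Hx.
assert (HK : 0 <= Rabs K / eps)
  by (apply Rdiv_le_0_compat; [apply Rabs_pos | apply cond_pos]).
assert (Hx1 : 1 <= x) by lra.
rewrite Rminus_0_r; eapply Rle_lt_trans; [apply HB, Hx1 |].
apply Rmult_lt_reg_r with x; [lra |].
unfold Rdiv; rewrite Rmult_assoc, Rinv_l, Rmult_1_r by lra.
apply Rle_lt_trans with (Rabs K); [apply Rle_abs |].
replace (Rabs K) with (eps * (Rabs K / eps)) by (field; apply Rgt_not_eq, cond_pos).
apply Rmult_lt_compat_l; [apply cond_pos | lra].
Qed.

Lemma is_lim_inv_bound (B : R -> R) K :
  (forall x, 1 <= Rabs x -> Rabs (B x) <= K / Rabs x) ->
  is_lim B m_infty 0 /\ is_lim B p_infty 0.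
Proof.
intros HB; split.
- apply is_lim_m_infty_opp, (is_lim_p_infty_inv_bound _ K); intros x Hx.
  specialize (HB (- x)); rewrite Rabs_Ropp, Rabs_right in HB by lra; auto.
- apply (is_lim_p_infty_inv_bound _ K); intros x Hx.
  specialize (HB x); rewrite Rabs_right in HB by lra; auto.
Qed.

Lemma is_lim_infty_scal (f : R -> R) k (lm lp : R) : 0 < k ->
  is_lim f m_infty lm -> is_lim f p_infty lp ->
  is_lim (fun y => f (k * y)) m_infty lm /\ is_lim (fun y => f (k * y)) p_infty lp.
Proof.
intros Hk Hm Hp; split; apply is_lim_spec; intros eps.
- destruct (proj2 (is_lim_spec _ _ _) Hm eps) as [M HM].
  exists (M / k); intros x Hx; apply HM.
  apply Rmult_lt_compat_l with (r := k) in Hx; [| lra].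
  replace (k * (M / k)) with M in Hx by (field; lra); lra.
- destruct (proj2 (is_lim_spec _ _ _) Hp eps) as [M HM].
  exists (M / k); intros x Hx; apply HM.
  apply Rmult_lt_compat_l with (r := k) in Hx; [| lra].
  replace (k * (M / k)) with M in Hx by (field; lra); lra.
Qed.

Definition gauss_primitive (x : R) : R := RInt (fun t => exp (- t ^ 2)) 0 x.

Lemma continuous_exp_neg_sq x : continuous (fun t => exp (- t ^ 2)) x.
Proof.
apply (ex_derive_continuous (K := R_AbsRing) (V := R_NormedModule)).
auto_derive; auto.
Qed.

Lemma is_derive_gauss_primitive x : is_derive gauss_primitive x (exp (- x ^ 2)).
Proof.
apply (is_derive_RInt (V := R_NormedModule) (fun t => exp (- t ^ 2)) gauss_primitive 0 x).
- exists (mkposreal 1 Rlt_0_1); intros y _.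
  apply (RInt_correct (V := R_CompleteNormedModule)).
  apply ex_RInt_of_continuous, continuous_exp_neg_sq.
- apply continuous_exp_neg_sq.
Qed.

Lemma gauss_primitive_0 : gauss_primitive 0 = 0.
Proof. apply (RInt_point (V := R_CompleteNormedModule)). Qed.

Lemma gauss_primitive_opp x : gauss_primitive (- x) = - gauss_primitive x.
Proof.
set (F y := gauss_primitive (- y) + gauss_primitive y).
assert (HF : forall y, is_derive F y 0).
{ intros y; evar (d : R); replace 0 with d.
  - apply (is_derive_plus (K := R_AbsRing) (V := R_NormedModule)).
    + apply (is_derive_comp gauss_primitive (fun y => - y)).
      * apply is_derive_gauss_primitive.
      * apply (is_derive_opp (K := R_AbsRing) (V := R_NormedModule) (fun y => y)).
        apply is_derive_id.
    + apply is_derive_gauss_primitive.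
  - unfold d, scal, opp, one, mult, plus; simpl; unfold mult; simpl.
    replace (- y * (- y * 1)) with (y * (y * 1)) by ring; ring. }
assert (HC : F x - F 0 = 0).
{ assert (HI := is_RInt_derive F (fun _ => 0) 0 x (fun y _ => HF y)
                  (fun y _ => continuous_const 0 y)).
  apply is_RInt_unique in HI; rewrite RInt_const in HI.
  unfold minus, plus, opp, scal in HI; simpl in HI; unfold mult in HI; simpl in HI; lra. }
unfold F in HC; rewrite Ropp_0, gauss_primitive_0 in HC; lra.
Qed.

Lemma is_lim_gauss_primitive :
  is_lim gauss_primitive m_infty (- (sqrt PI / 2)) /\
  is_lim gauss_primitive p_infty (sqrt PI / 2).
Proof.
assert (Hp : is_lim gauss_primitive p_infty (sqrt PI / 2)).
{ apply is_lim_spec; intros eps.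
  destruct (GaussIntegral.antiderivative_gauss_cvg gauss_primitive
              gauss_primitive_0
              (fun x => proj1 (is_derive_Reals _ _ _) (is_derive_gauss_primitive x))
              eps (cond_pos eps)) as [A HA].
  exists A; intros x Hx; apply HA; lra. }
split; [| exact Hp].
apply is_lim_m_infty_opp.
apply (is_lim_ext (fun x => - gauss_primitive x)).
- intros x; rewrite gauss_primitive_opp; reflexivity.
- apply (is_lim_opp gauss_primitive p_infty (sqrt PI / 2)), Hp.
Qed.

Lemma sqrt_2PI_ge_1 : 1 <= sqrt (2 * PI).
Proof.
rewrite <- sqrt_1; apply sqrt_le_1_alt.
pose proof PI_RGT_0; pose proof PI2_1; lra.
Qed.

Lemma is_RInt_line_gauss_scaled a : 0 < a ->
  is_RInt_line (fun x => exp (- (a * x ^ 2) / 2) / sqrt (2 * PI)) (/ sqrt a).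
Proof.
intros Ha.
set (k := sqrt (a / 2)).
assert (Hk : 0 < k) by (apply sqrt_lt_R0; lra).
assert (Hk2 : k * k = a / 2) by (apply sqrt_sqrt; lra).
pose proof sqrt_2PI_ge_1.
set (C := / (k * sqrt (2 * PI))).
assert (HC : k * sqrt (2 * PI) = sqrt a * sqrt PI).
{ unfold k; rewrite <- !sqrt_mult_alt; [f_equal; field | lra | pose proof PI_RGT_0; lra]. }
replace (/ sqrt a) with (sqrt PI / 2 * C - - (sqrt PI / 2) * C).
2:{ unfold C; rewrite HC; field.
    pose proof PI_RGT_0; split; apply Rgt_not_eq, sqrt_lt_R0; lra. }
destruct is_lim_gauss_primitive as [Hm Hp].
destruct (is_lim_infty_scal gauss_primitive k _ _ Hk Hm Hp) as [Hkm Hkp].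
apply (is_RInt_line_antiderivative (fun x => gauss_primitive (k * x) * C)).
- intros x; evar (d : R); replace (exp (- (a * x ^ 2) / 2) / sqrt (2 * PI)) with d.
  + apply (is_derive_mult (fun x => gauss_primitive (k * x)) (fun _ => C)).
    * apply (is_derive_comp gauss_primitive (fun x => k * x)).
      -- apply is_derive_gauss_primitive.
      -- apply (is_derive_scal (fun y => y)), is_derive_id.
    * apply is_derive_const.
    * intros; apply Rmult_comm.
  + assert (E : exp (- (k * x) ^ 2) = exp (- (a * x ^ 2) / 2))
      by (f_equal; replace a with (2 * (k * k)) by lra; field).
    unfold d; rewrite E; unfold C, scal, one, mult, plus, zero; simpl.
    unfold mult; simpl; field; lra.
- intros x; apply (ex_derive_continuous (K := R_AbsRing) (V := R_NormedModule)).
  auto_derive; auto.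
- apply (is_lim_scal_r _ C m_infty (- (sqrt PI / 2))), Hkm.
- apply (is_lim_scal_r _ C p_infty (sqrt PI / 2)), Hkp.
Qed.

Lemma gauss_density_pos x : 0 < gauss_density x.
Proof.
unfold gauss_density; apply Rdiv_lt_0_compat; [apply exp_pos |].
pose proof sqrt_2PI_ge_1; lra.
Qed.

Lemma continuous_gauss_density x : continuous gauss_density x.
Proof.
apply (ex_derive_continuous (K := R_AbsRing) (V := R_NormedModule)).
unfold gauss_density; auto_derive; auto.
Qed.

Lemma is_derive_gauss_density x : is_derive gauss_density x (- x * gauss_density x).
Proof.
unfold gauss_density; auto_derive; auto.
unfold Rdiv; simpl; field; pose proof sqrt_2PI_ge_1; lra.
Qed.

(* From [exp y >= 1 + y] at [y = x^2 / 2]. *)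
Lemma gauss_density_tail x : 1 <= Rabs x ->
  (1 + Rabs x) * gauss_density x <= 4 / Rabs x.
Proof.
intros Hx.
assert (Hx2 : x ^ 2 = Rabs x * Rabs x).
{ rewrite <- Rabs_mult; simpl; rewrite Rmult_1_r.
  symmetry; apply Rabs_right, Rle_ge, Rle_0_sqr. }
set (e := exp (x ^ 2 / 2)); set (s := sqrt (2 * PI)).
assert (He : 1 + x ^ 2 / 2 <= e) by apply exp_ineq1_le.
assert (Hs : 1 <= s) by apply sqrt_2PI_ge_1.
assert (E : gauss_density x = / (e * s)).
{ unfold gauss_density, e, s; rewrite Rinv_mult, <- exp_Ropp.
  unfold Rdiv; do 2 f_equal; field. }
assert (Hprod : (1 + Rabs x) * Rabs x <= 4 * (e * s)) by (rewrite Hx2 in He; nra).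
rewrite E; apply Rmult_le_reg_r with (e * s * Rabs x); [nra |].
replace ((1 + Rabs x) * / (e * s) * (e * s * Rabs x)) with ((1 + Rabs x) * Rabs x)
  by (field; nra).
replace (4 / Rabs x * (e * s * Rabs x)) with (4 * (e * s)) by (field; lra).
exact Hprod.
Qed.

(* Stein's identity [E[V k(V)] = E[k'(V)]]: the growth bound on [k] makes the
   boundary term [k * gauss_density] of the integration by parts vanish. *)
Lemma gauss_stein (k k' : R -> R) M l :
  (forall x, is_derive k x (k' x)) -> (forall x, continuous k' x) ->
  (forall x, Rabs (k x) <= M * (1 + Rabs x)) ->
  is_RInt_line (fun x => k' x * gauss_density x) l ->
  is_RInt_line (fun x => x * k x * gauss_density x) l.
Proof.
intros Hk Hk' HM Hl.
assert (Hck : forall x, continuous k x)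
  by (intros x; apply (ex_derive_continuous (K := R_AbsRing) (V := R_NormedModule));
      eexists; apply Hk).
assert (HM0 : 0 <= M) by (specialize (HM 0); pose proof (Rabs_pos (k 0));
                         rewrite Rabs_R0 in HM; lra).
assert (Hlim := is_lim_inv_bound (fun x => - (k x * gauss_density x)) (4 * M)).
destruct Hlim as [Hm Hp].
{ intros x Hx; rewrite Rabs_Ropp, Rabs_mult, (Rabs_right (gauss_density x))
    by (apply Rle_ge, Rlt_le, gauss_density_pos).
  pose proof (gauss_density_pos x); pose proof (gauss_density_tail x Hx).
  apply Rle_trans with (M * (1 + Rabs x) * gauss_density x).
  - apply Rmult_le_compat_r; [lra | apply HM].
  - unfold Rdiv in *; rewrite Rmult_assoc.
    replace (4 * M * / Rabs x) with (M * (4 * / Rabs x)) by ring.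
    apply Rmult_le_compat_l; assumption. }
apply (is_RInt_line_add_derivative _ _ (fun x => - (k x * gauss_density x)) l Hl);
  auto.
- intros x; apply (continuous_mult (K := R_AbsRing));
    [apply (continuous_mult (K := R_AbsRing)); [apply continuous_id | apply Hck] |
     apply continuous_gauss_density].
- intros x; apply (continuous_mult (K := R_AbsRing)); auto;
    apply continuous_gauss_density.
- intros x; evar (d : R).
  replace (x * k x * gauss_density x - k' x * gauss_density x) with d.
  + apply (is_derive_opp (K := R_AbsRing) (V := R_NormedModule)
             (fun x => k x * gauss_density x)).
    apply (is_derive_mult k gauss_density); auto.
    * apply is_derive_gauss_density.
    * intros; apply Rmult_comm.
  + unfold d, opp, plus, mult; simpl; unfold mult; simpl; ring.
Qed.

Lemma is_RInt_line_gauss_density : is_RInt_line gauss_density 1.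
Proof.
replace 1 with (/ sqrt 1) by (rewrite sqrt_1; apply Rinv_1).
generalize (is_RInt_line_gauss_scaled 1 Rlt_0_1); apply is_RInt_gen_ext.
apply filter_prod_line; intros a b _ x _.
unfold gauss_density; rewrite Rmult_1_l; reflexivity.
Qed.

Lemma is_RInt_line_gauss_second_moment :
  is_RInt_line (fun x => x * x * gauss_density x) 1.
Proof.
apply (gauss_stein (fun x => x) (fun _ => 1) 1).
- intros x; auto_derive; auto.
- intros x; apply continuous_const.
- intros x; pose proof (Rabs_pos x); lra.
- generalize is_RInt_line_gauss_density; apply is_RInt_gen_ext, filter_prod_line.
  intros a b _ x _; symmetry; apply Rmult_1_l.
Qed.

Lemma is_RInt_line_exp_sq_gauss c :
  is_RInt_line (fun x => exp (- (c * x) ^ 2) * gauss_density x) (/ sqrt (1 + 2 * c ^ 2)).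
Proof.
assert (Hc : 0 < 1 + 2 * c ^ 2) by (pose proof (pow2_ge_0 c); lra).
generalize (is_RInt_line_gauss_scaled _ Hc); apply is_RInt_gen_ext, filter_prod_line.
intros a b _ x _; unfold gauss_density, Rdiv.
rewrite <- Rmult_assoc, <- exp_plus; do 2 f_equal; field.
Qed.

Lemma le_of_is_derive_nonneg (F f : R -> R) a b :
  (forall x, is_derive F x (f x)) -> (forall x, continuous f x) ->
  a <= b -> (forall x, a <= x <= b -> 0 <= f x) -> F a <= F b.
Proof.
intros HF Hc Hab Hf.
assert (HI := is_RInt_derive F f a b (fun x _ => HF x) (fun x _ => Hc x)).
assert (0 <= RInt f a b).
{ apply RInt_ge_0; [lra | apply ex_RInt_of_continuous; auto |].
  intros x Hx; apply Hf; lra. }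
rewrite (is_RInt_unique _ _ _ _ HI) in H.
unfold minus, plus, opp in H; simpl in H; lra.
Qed.

Lemma is_derive_cosh x : is_derive cosh x (sinh x).
Proof. apply is_derive_Reals, derivable_pt_lim_cosh. Qed.

Lemma is_derive_sinh x : is_derive sinh x (cosh x).
Proof. apply is_derive_Reals, derivable_pt_lim_sinh. Qed.

Lemma continuous_sinh x : continuous sinh x.
Proof.
apply (ex_derive_continuous (K := R_AbsRing) (V := R_NormedModule)).
eexists; apply is_derive_sinh.
Qed.

Lemma cosh_pos x : 0 < cosh x.
Proof. unfold cosh; pose proof (exp_pos x); pose proof (exp_pos (- x)); lra. Qed.

Lemma cosh_opp x : cosh (- x) = cosh x.
Proof. unfold cosh; rewrite Ropp_involutive; field. Qed.

Lemma sinh_nonneg x : 0 <= x -> 0 <= sinh x.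
Proof.
intros Hx; destruct (Req_dec x 0) as [-> | Hx0]; [rewrite sinh_0; lra |].
rewrite <- sinh_0; apply Rlt_le, sinh_lt; lra.
Qed.

Lemma cosh_sq_sub_sinh_sq x : cosh x * cosh x - sinh x * sinh x = 1.
Proof.
unfold cosh, sinh; rewrite exp_Ropp; pose proof (exp_pos x); field; lra.
Qed.

Lemma cosh_le a b : 0 <= a <= b -> cosh a <= cosh b.
Proof.
intros Hab; apply (le_of_is_derive_nonneg cosh sinh); try lra.
- apply is_derive_cosh.
- apply continuous_sinh.
- intros x Hx; apply sinh_nonneg; lra.
Qed.

Lemma cosh_le_abs a b : Rabs a <= Rabs b -> cosh a <= cosh b.
Proof.
intros Hab.
assert (Habs : forall x, cosh x = cosh (Rabs x)).
{ intros x; destruct (Rcase_abs x); [rewrite Rabs_left, cosh_opp | rewrite Rabs_right]; auto. }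
rewrite (Habs a), (Habs b); apply cosh_le; split; [apply Rabs_pos | exact Hab].
Qed.

Lemma cosh_ge_1 x : 1 <= cosh x.
Proof. rewrite <- cosh_0; apply cosh_le_abs; rewrite Rabs_R0; apply Rabs_pos. Qed.

Lemma sinh_le_mul_cosh y : 0 <= y -> sinh y <= y * cosh y.
Proof.
intros Hy.
assert (H := le_of_is_derive_nonneg (fun y => y * cosh y - sinh y)
               (fun y => y * sinh y) 0 y).
cbv beta in H; rewrite sinh_0, cosh_0 in H.
enough (0 * 1 - 0 <= y * cosh y - sinh y) by lra.
apply H; auto.
- intros x; evar (d : R); replace (x * sinh x) with d.
  + apply (is_derive_minus (fun y => y * cosh y) sinh).
    * apply (is_derive_mult (fun y => y) cosh);
        [apply is_derive_id | apply is_derive_cosh | intros; apply Rmult_comm].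
    * apply is_derive_sinh.
  + unfold d, minus, plus, opp, mult, one; simpl; unfold mult; simpl; ring.
- intros x; apply (continuous_mult (K := R_AbsRing));
    [apply continuous_id | apply continuous_sinh].
- intros x Hx; apply Rmult_le_pos; [lra | apply sinh_nonneg; lra].
Qed.

Lemma exp_neg_sq_mul_cosh_le_1 y : 0 <= y -> exp (- (y ^ 2) / 2) * cosh y <= 1.
Proof.
intros Hy.
assert (H := le_of_is_derive_nonneg (fun y => - (exp (- (y ^ 2) / 2) * cosh y))
               (fun y => exp (- (y ^ 2) / 2) * (y * cosh y - sinh y)) 0 y).
cbv beta in H; rewrite cosh_0 in H; replace (- (0 ^ 2) / 2) with 0 in H by (simpl; field).
rewrite exp_0 in H.
enough (- (1 * 1) <= - (exp (- (y ^ 2) / 2) * cosh y)) by lra.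
apply H; auto.
- intros x; evar (d : R); replace (exp (- (x ^ 2) / 2) * (x * cosh x - sinh x)) with d.
  + apply (is_derive_opp (K := R_AbsRing) (V := R_NormedModule)
             (fun y => exp (- (y ^ 2) / 2) * cosh y)).
    apply (is_derive_mult (fun y => exp (- (y ^ 2) / 2)) cosh);
      [auto_derive; auto | apply is_derive_cosh | intros; apply Rmult_comm].
  + unfold d, opp, plus, mult, one; simpl; unfold mult; simpl; unfold Rdiv; field.
- intros x; apply (ex_derive_continuous (K := R_AbsRing) (V := R_NormedModule)).
  unfold cosh, sinh; auto_derive; auto.
- intros x Hx; apply Rmult_le_pos; [apply Rlt_le, exp_pos |].
  pose proof (sinh_le_mul_cosh x ltac:(lra)); lra.
Qed.

Lemma cosh_le_exp_sq z : cosh z <= exp (z ^ 2 / 2).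
Proof.
assert (Hpos : forall y, 0 <= y -> cosh y <= exp (y ^ 2 / 2)).
{ intros y Hy; pose proof (exp_neg_sq_mul_cosh_le_1 y Hy).
  assert (E : exp (- (y ^ 2) / 2) * exp (y ^ 2 / 2) = 1).
  { rewrite <- exp_plus; replace (- (y ^ 2) / 2 + y ^ 2 / 2) with 0 by field.
    apply exp_0. }
  pose proof (exp_pos (y ^ 2 / 2)); pose proof (exp_pos (- (y ^ 2) / 2)).
  apply Rmult_le_reg_l with (exp (- (y ^ 2) / 2)); nra. }
destruct (Rle_or_lt 0 z) as [Hz | Hz]; [apply Hpos; lra |].
rewrite <- cosh_opp; replace (z ^ 2) with ((- z) ^ 2) by ring; apply Hpos; lra.
Qed.

Definition weight (z : R) : R := / (exp (- z) + exp z) ^ 2.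

Lemma weight_cosh z : weight z = / (4 * cosh z ^ 2).
Proof. unfold weight, cosh; f_equal; field. Qed.

Lemma weight_pos z : 0 < weight z.
Proof.
rewrite weight_cosh; apply Rinv_0_lt_compat.
pose proof (cosh_pos z); simpl; nra.
Qed.

Lemma weight_le_quarter z : weight z <= / 4.
Proof.
rewrite weight_cosh; pose proof (cosh_ge_1 z).
apply Rinv_le_contravar; simpl; nra.
Qed.

Lemma weight_antitone a b : Rabs a <= Rabs b -> weight b <= weight a.
Proof.
intros Hab; rewrite !weight_cosh.
pose proof (cosh_le_abs a b Hab); pose proof (cosh_ge_1 a).
apply Rinv_le_contravar; simpl; nra.
Qed.

Lemma weight_ge_exp_sq z : / 4 * exp (- z ^ 2) <= weight z.
Proof.
rewrite weight_cosh.
replace (exp (- z ^ 2)) with (/ (exp (z ^ 2 / 2) * exp (z ^ 2 / 2)))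
  by (rewrite <- exp_plus, <- exp_Ropp; f_equal; field).
pose proof (cosh_le_exp_sq z); pose proof (cosh_ge_1 z).
set (e := exp (z ^ 2 / 2)) in *; set (ch := cosh z) in *.
rewrite <- Rinv_mult; apply Rinv_le_contravar; nra.
Qed.

Lemma continuous_weight z : continuous weight z.
Proof.
apply (ex_derive_continuous (K := R_AbsRing) (V := R_NormedModule)).
unfold weight; auto_derive.
pose proof (exp_pos z); pose proof (exp_pos (- z)); nra.
Qed.

Lemma is_derive_tanh z : is_derive tanh z (4 * weight z).
Proof.
rewrite weight_cosh; unfold tanh.
pose proof (cosh_pos z).
evar (d : R); replace (4 * / (4 * cosh z ^ 2)) with d.
- apply (is_derive_div sinh cosh); [apply is_derive_sinh | apply is_derive_cosh | lra].
- unfold d; rewrite cosh_sq_sub_sinh_sq; field; lra.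
Qed.

Lemma tanh_0 : tanh 0 = 0.
Proof. unfold tanh; rewrite sinh_0, cosh_0; field. Qed.

Lemma continuous_slope_at_0 (g : R -> R) (l z : R) :
  g 0 = 0 -> is_derive g 0 l -> (forall x, continuous g x) ->
  continuous (fun x => if Req_EM_T x 0 then l else g x / x) z.
Proof.
intros Hg0 Hd Hc.
destruct (Req_EM_T z 0) as [-> | Hz].
- apply continuity_pt_filterlim; intros eps Heps.
  destruct (proj1 (is_derive_Reals g 0 l) Hd eps Heps) as [del Hdel].
  exists del; split; [apply cond_pos |].
  intros x [[_ Hx0] Hxd]; simpl in *; unfold R_dist in *.
  destruct (Req_EM_T 0 0) as [_ | []]; [| reflexivity].
  destruct (Req_EM_T x 0) as [-> | Hx]; [contradiction |].
  rewrite Rminus_0_r in Hxd.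
  specialize (Hdel x Hx Hxd); rewrite Rplus_0_l, Hg0, Rminus_0_r in Hdel; exact Hdel.
- apply (continuous_ext_loc _ (fun x => g x * / x)).
  + exists (mkposreal (Rabs z) (Rabs_pos_lt _ Hz)); intros x Hx.
    destruct (Req_EM_T x 0) as [-> | _]; [| reflexivity].
    exfalso; unfold ball in Hx; simpl in Hx; unfold AbsRing_ball, abs, minus, plus, opp in Hx.
    simpl in Hx; rewrite Rplus_0_l, Rabs_Ropp in Hx; lra.
  + apply (continuous_mult (K := R_AbsRing)); [apply Hc | apply continuous_Rinv, Hz].
Qed.

Definition tanh_slope (z : R) : R := if Req_EM_T z 0 then 1 else tanh z / z.

Lemma continuous_tanh_slope z : continuous tanh_slope z.
Proof.
apply (continuous_slope_at_0 tanh 1 z tanh_0).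
- replace 1 with (4 * weight 0) by (unfold weight; rewrite Ropp_0, exp_0; field).
  apply is_derive_tanh.
- intros x; apply (ex_derive_continuous (K := R_AbsRing) (V := R_NormedModule)).
  eexists; apply is_derive_tanh.
Qed.

Lemma mul_tanh_slope z : z * tanh_slope z = tanh z.
Proof.
unfold tanh_slope; destruct (Req_EM_T z 0) as [-> | Hz].
- rewrite tanh_0; ring.
- field; exact Hz.
Qed.

Lemma is_RInt_weight_mul z :
  is_RInt (fun u => weight (u * z)) 0 1 (tanh_slope z / 4).
Proof.
unfold tanh_slope; destruct (Req_EM_T z 0) as [-> | Hz].
- apply (is_RInt_ext (fun _ => / 4)).
  + intros u _; rewrite Rmult_0_r; unfold weight; rewrite Ropp_0, exp_0.
    change (/ 4 = / (1 + 1) ^ 2); field.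
  + replace (1 / 4) with ((1 - 0) * / 4) by field.
    apply (is_RInt_const (V := R_NormedModule)).
- evar (v : R); replace (tanh z / z / 4) with v.
  + apply (is_RInt_derive (fun u => / (4 * z) * tanh (u * z))).
    * intros u _; evar (d : R); replace (weight (u * z)) with d.
      -- apply (is_derive_scal (fun u => tanh (u * z))).
         apply (is_derive_comp tanh (fun u => u * z)); [apply is_derive_tanh |].
         auto_derive; auto.
      -- unfold d; unfold scal, mult; simpl; unfold mult; simpl; field; exact Hz.
    * intros u _; apply (continuous_comp (fun u => u * z) weight);
        [apply (continuous_mult (K := R_AbsRing));
           [apply continuous_id | apply continuous_const]
        | apply continuous_weight].
  + unfold v, minus, plus, opp; simpl; rewrite Rmult_1_l, Rmult_0_l, tanh_0; field; exact Hz.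
Qed.

Lemma tanh_slope_bounds z : weight z <= tanh_slope z / 4 <= / 4.
Proof.
assert (HI := is_RInt_weight_mul z).
assert (Hex : ex_RInt (fun u => weight (u * z)) 0 1) by (eexists; exact HI).
rewrite <- (is_RInt_unique _ _ _ _ HI); split.
- apply Rle_trans with (RInt (fun _ => weight z) 0 1).
  + rewrite RInt_const; unfold scal; simpl; unfold mult; simpl; lra.
  + apply RInt_le; auto; [lra | apply ex_RInt_const |].
    intros u Hu; apply weight_antitone; rewrite Rabs_mult, (Rabs_right u) by lra.
    pose proof (Rabs_pos z); nra.
- apply Rle_trans with (RInt (fun _ => / 4) 0 1).
  + apply RInt_le; auto; [lra | apply ex_RInt_const |].
    intros u _; apply weight_le_quarter.
  + rewrite RInt_const; unfold scal; simpl; unfold mult; simpl; lra.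
Qed.

Definition mean_weight (c y : R) : R := tanh_slope (c * y) / 4.

Lemma continuous_mean_weight c y : continuous (mean_weight c) y.
Proof.
apply (continuous_mult (K := R_AbsRing)); [| apply continuous_const].
apply (continuous_comp (fun x => c * x) tanh_slope); [| apply continuous_tanh_slope].
apply (continuous_mult (K := R_AbsRing)); [apply continuous_const | apply continuous_id].
Qed.

Lemma is_RInt_weight_div a sigma y : sigma <> 0 ->
  is_RInt (fun u => weight (u * a * y / sigma)) 0 1 (mean_weight (a / sigma) y).
Proof.
intros Hs; apply (is_RInt_ext (fun u => weight (u * (a / sigma * y)))).
- intros u _; f_equal; field; exact Hs.
- apply is_RInt_weight_mul.
Qed.

Lemma is_derive_mul_mean_weight c x :
  is_derive (fun x => x * mean_weight c x) x (weight (c * x)).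
Proof.
unfold mean_weight; destruct (Req_dec c 0) as [-> | Hc].
- apply (is_derive_ext (fun x => / 4 * x)).
  + intros t; change (@eq R (/ 4 * t) (t * (tanh_slope (0 * t) / 4))).
    unfold tanh_slope; rewrite Rmult_0_l.
    destruct (Req_EM_T 0 0) as [_ | []]; [field | reflexivity].
  + rewrite Rmult_0_l; replace (weight 0) with (/ 4 * 1)
      by (unfold weight; rewrite Ropp_0, exp_0; field).
    apply (is_derive_scal (fun x => x)), (is_derive_id (K := R_AbsRing)).
- apply (is_derive_ext (fun x => / (4 * c) * tanh (c * x))).
  + intros t; change (@eq R (/ (4 * c) * tanh (c * t)) (t * (tanh_slope (c * t) / 4))).
    rewrite <- (mul_tanh_slope (c * t)); field; exact Hc.
  + evar (d : R); replace (weight (c * x)) with d.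
    * apply (is_derive_scal (fun x => tanh (c * x))).
      apply (is_derive_comp tanh (fun x => c * x)); [apply is_derive_tanh |].
      auto_derive; auto.
    * unfold d; unfold scal, mult; simpl; unfold mult; simpl; field; exact Hc.
Qed.

Lemma improper_int_gauss_const c : improper_int (fun x => c * gauss_density x) c.
Proof.
apply improper_int_of_RInt_line.
- intros x; apply (continuous_mult (K := R_AbsRing));
    [apply continuous_const | apply continuous_gauss_density].
- assert (H := is_RInt_line_scal _ c _ is_RInt_line_gauss_density).
  rewrite Rmult_1_r in H; exact H.
Qed.

Lemma improper_int_gauss_second_moment c :
  improper_int (fun x => x * x * c * gauss_density x) c.
Proof.
apply improper_int_of_RInt_line.
- intros x; apply (continuous_mult (K := R_AbsRing)); [| apply continuous_gauss_density].
  apply (ex_derive_continuous (K := R_AbsRing) (V := R_NormedModule)); auto_derive; auto.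
- assert (H := is_RInt_line_scal _ c _ is_RInt_line_gauss_second_moment).
  rewrite Rmult_1_r in H; revert H.
  apply is_RInt_gen_ext, filter_prod_line; intros a b _ x _.
  change (@eq R (c * (x * x * gauss_density x)) (x * x * c * gauss_density x)); ring.
Qed.

Lemma gauss_exp_ext n : forall h h' l,
  gauss_exp n h l -> (forall v, h v = h' v) -> gauss_exp n h' l.
Proof.
induction n as [| n IH]; intros h h' l H E; simpl in *.
- rewrite H; apply E.
- destruct H as [g [Hg Hi]]; exists g; split; auto.
  intros x; apply (IH (fun v => h (vcons x v))); auto.
Qed.

Lemma gauss_exp_const n c : gauss_exp n (fun _ => c) c.
Proof.
induction n as [| n IH]; simpl; [reflexivity |].
exists (fun _ => c); split; [auto | apply improper_int_gauss_const].
Qed.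

Lemma gauss_exp_coord_sq n : forall i c, (i < n)%nat ->
  gauss_exp n (fun v => v i * v i * c) c.
Proof.
induction n as [| n IH]; intros i c Hi; [lia |]; simpl.
destruct i as [| i].
- exists (fun x => x * x * c); split.
  + intros x; apply (gauss_exp_ext n (fun _ => x * x * c));
      [apply gauss_exp_const | reflexivity].
  + apply improper_int_gauss_second_moment.
- exists (fun _ => c); split.
  + intros x; apply (IH i c); lia.
  + apply improper_int_gauss_const.
Qed.

Lemma riemann_int_of_is_RInt f a b l : is_RInt f a b l -> riemann_int f a b l.
Proof.
intros H; exists (ex_RInt_Reals_0 _ _ _ (ex_intro _ l H)).
rewrite <- RInt_Reals; apply is_RInt_unique, H.
Qed.

Lemma Fentry_diag d sigma theta j (psi g : R -> R) L :
  (forall y, is_RInt (fun u => weight (u * sqrt (sqnorm d theta) * y / sigma))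
               0 1 (psi y)) ->
  (forall x, gauss_exp (pred d) (fun v => vcons x v j * vcons x v j * psi x) (g x)) ->
  improper_int (fun x => g x * gauss_density x) L ->
  (1 <= d)%nat -> Fentry d sigma theta j j L.
Proof.
intros Hpsi Hg HL Hd.
exists (fun v => v j * v j * psi (v 0%nat)); split.
- intros v; apply riemann_int_of_is_RInt.
  exact (is_RInt_scal (V := R_NormedModule) _ 0 1 (v j * v j) _ (Hpsi (v 0%nat))).
- destruct d as [| d]; [lia |]; exists g; split; [| exact HL].
  intros x; apply (gauss_exp_ext d _ _ _ (Hg x)); reflexivity.
Qed.

Lemma Fentry_first d sigma theta (psi : R -> R) L :
  (forall y, is_RInt (fun u => weight (u * sqrt (sqnorm d theta) * y / sigma))
               0 1 (psi y)) ->
  (forall x, continuous psi x) ->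
  is_RInt_line (fun x => x * x * psi x * gauss_density x) L ->
  (1 <= d)%nat -> Fentry d sigma theta 0 0 L.
Proof.
intros Hpsi Hc HL; apply (Fentry_diag _ _ _ _ psi (fun x => x * x * psi x)); auto.
- intros x; apply (gauss_exp_ext _ (fun _ => x * x * psi x));
    [apply gauss_exp_const | reflexivity].
- apply improper_int_of_RInt_line; auto.
  intros x; apply (continuous_mult (K := R_AbsRing)); [| apply continuous_gauss_density].
  apply (continuous_mult (K := R_AbsRing)); [| apply Hc].
  apply (continuous_mult (K := R_AbsRing)); apply continuous_id.
Qed.

Lemma Fentry_other d sigma theta j (psi : R -> R) L :
  (forall y, is_RInt (fun u => weight (u * sqrt (sqnorm d theta) * y / sigma))
               0 1 (psi y)) ->
  (forall x, continuous psi x) ->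
  is_RInt_line (fun x => psi x * gauss_density x) L ->
  (1 <= j < d)%nat -> Fentry d sigma theta j j L.
Proof.
intros Hpsi Hc HL Hj; apply (Fentry_diag _ _ _ _ psi psi); auto; [| | lia].
- intros x; destruct j as [| j]; [lia |].
  apply (gauss_exp_coord_sq (pred d) j (psi x)); lia.
- apply improper_int_of_RInt_line; auto.
  intros x; apply (continuous_mult (K := R_AbsRing));
    [apply Hc | apply continuous_gauss_density].
Qed.

Lemma ex_RInt_line_bounded_gauss (f : R -> R) M :
  (forall x, continuous f x) -> (forall x, 0 <= f x <= M) ->
  exists l, is_RInt_line (fun x => f x * gauss_density x) l.
Proof.
intros Hc Hf.
apply (ex_RInt_line_dominated _ (fun x => M * gauss_density x) (M * 1)).
- intros x; apply (continuous_mult (K := R_AbsRing));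
    [apply Hc | apply continuous_gauss_density].
- intros x; apply (continuous_mult (K := R_AbsRing));
    [apply continuous_const | apply continuous_gauss_density].
- intros x; pose proof (Hf x); pose proof (gauss_density_pos x); split; nra.
- apply is_RInt_line_scal, is_RInt_line_gauss_density.
Qed.

Lemma gauss_mean_weight_moments c :
  exists L1 L2,
    is_RInt_line (fun x => x * x * mean_weight c x * gauss_density x) L1 /\
    is_RInt_line (fun x => mean_weight c x * gauss_density x) L2 /\
    L1 <= L2 /\ / 4 * / sqrt (1 + 2 * c ^ 2) <= L1.
Proof.
assert (Hcw : forall x, continuous (fun x => weight (c * x)) x).
{ intros x; apply (continuous_comp (fun x => c * x) weight); [| apply continuous_weight].
  apply (continuous_mult (K := R_AbsRing)); [apply continuous_const | apply continuous_id]. }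
assert (Hbounds : forall x,
          0 < weight (c * x) /\ weight (c * x) <= mean_weight c x <= / 4).
{ intros x; pose proof (weight_pos (c * x)); pose proof (tanh_slope_bounds (c * x)).
  unfold mean_weight; lra. }
destruct (ex_RInt_line_bounded_gauss _ (/ 4) Hcw) as [L1 HL1].
{ intros x; pose proof (Hbounds x); lra. }
destruct (ex_RInt_line_bounded_gauss _ (/ 4) (continuous_mean_weight c)) as [L2 HL2].
{ intros x; pose proof (Hbounds x); lra. }
exists L1, L2; split; [| split; [exact HL2 | split]].
- assert (Hk : forall x, Rabs (x * mean_weight c x) <= / 4 * (1 + Rabs x)).
  { intros x; pose proof (Hbounds x).
    rewrite Rabs_mult, (Rabs_right (mean_weight c x)) by lra.
    pose proof (Rabs_pos x); nra. }
  generalize (gauss_stein _ _ _ _ (is_derive_mul_mean_weight c) Hcw Hk HL1).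
  apply is_RInt_gen_ext, filter_prod_line; intros a b _ x _.
  change (@eq R (x * (x * mean_weight c x) * gauss_density x)
                (x * x * mean_weight c x * gauss_density x)); ring.
- apply (is_RInt_line_le _ _ _ _ HL1 HL2); intros x.
  apply Rmult_le_compat_r; [apply Rlt_le, gauss_density_pos | apply Hbounds].
- apply (is_RInt_line_le _ _ _ _
           (is_RInt_line_scal _ (/ 4) _ (is_RInt_line_exp_sq_gauss c)) HL1).
  intros x; rewrite <- Rmult_assoc.
  apply Rmult_le_compat_r; [apply Rlt_le, gauss_density_pos | apply weight_ge_exp_sq].
Qed.

Lemma inv_sqrt_lower_bound a : 0 <= a -> 1 / (4 * (1 + a)) <= / 4 * / sqrt (1 + a).
Proof.
intros Ha.
assert (Hs1 : 1 <= sqrt (1 + a))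
  by (rewrite <- sqrt_1 at 1; apply sqrt_le_1_alt; lra).
assert (Hs : sqrt (1 + a) <= 1 + a).
{ pose proof (sqrt_sqrt (1 + a) ltac:(lra)).
  assert (0 <= (sqrt (1 + a) - 1) * sqrt (1 + a)) by (apply Rmult_le_pos; lra).
  lra. }
unfold Rdiv; rewrite Rmult_1_l, Rinv_mult.
apply Rmult_le_compat_l; [lra |]; apply Rinv_le_contravar; lra.
Qed.

Lemma sqnorm_nonneg d theta : 0 <= sqnorm d theta.
Proof.
unfold sqnorm; induction (seq 0 d) as [| i l IH]; simpl; [lra |].
pose proof (pow2_ge_0 (theta i)); simpl in *; lra.
Qed.

Theorem lemma3 (d : nat) (sigma : R) (theta : nat -> R)
  (hd : (1 <= d)%nat) (hsigma : 0 < sigma)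
  (htheta : sqnorm d theta <= 5 * sigma ^ 2 / 8) :
  forall j : nat, (j < d)%nat ->
    exists Fjj F11 : R,
      Fentry d sigma theta j j Fjj /\
      Fentry d sigma theta 0%nat 0%nat F11 /\
      Fjj >= F11 /\
      F11 >= 1 / (4 * (1 + 2 * sqnorm d theta / sigma ^ 2)).
Proof.
intros j Hj.
set (c := sqrt (sqnorm d theta) / sigma).
assert (Hpsi := fun y => is_RInt_weight_div (sqrt (sqnorm d theta)) sigma y
                           (Rgt_not_eq _ _ hsigma)).
destruct (gauss_mean_weight_moments c) as (L1 & L2 & HL1 & HL2 & H12 & Hlow).
assert (F00 : Fentry d sigma theta 0 0 L1)
  by (apply (Fentry_first _ _ _ (mean_weight c)); auto using continuous_mean_weight).
assert (Hbound : L1 >= 1 / (4 * (1 + 2 * sqnorm d theta / sigma ^ 2))).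
{ replace (2 * sqnorm d theta / sigma ^ 2) with (2 * c ^ 2).
  - apply Rle_ge, (Rle_trans _ _ _ (inv_sqrt_lower_bound (2 * c ^ 2) ltac:(nra)) Hlow).
  - unfold c, Rdiv; rewrite Rpow_mult_distr, pow2_sqrt, pow_inv by apply sqnorm_nonneg.
    ring. }
destruct j as [| j].
- exists L1, L1; repeat split; auto; lra.
- exists L2, L1; repeat split; auto; [| lra].
  apply (Fentry_other _ _ _ _ (mean_weight c)); auto using continuous_mean_weight; lia.
Qed.
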